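(* Let $G$ be a Garside group with Garside element $\Delta$, let $m$ be the smallest positive integer such that $\Delta^m$ is central in $G$, and let $G_\Delta=G/\langle\Delta^m\rangle$. Then every finite subgroup of $G_\Delta$ is cyclic.
   Context: $G$ is a Garside group: the group of fractions of a Garside monoid $G^+$ (an atomic, left and right cancellative monoid that is a lattice under both the prefix order $\le_L$ and the suffix order $\le_R$, with a Garside element $\Delta$ whose left and right divisors coincide, form a finite set, and generate $G^+$). Some positive power of $\Delta$ is always central in $G$, so $m$ is well defined; $\langle\Delta^m\rangle$ denotes the (normal) cyclic subgroup generated by $\Delta^m$. *)

From Stdlib Require Import ZArith List.
Import ListNotations.
Set Implicit Arguments.

Record Group := {
  carrier :> Type;
  gmul : carrier -> carrier -> carrier;
  gone : carrier;
  ginv : carrier -> carrier;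
  gmul_assoc : forall x y z, gmul x (gmul y z) = gmul (gmul x y) z;
  gmul_1l : forall x, gmul gone x = x;
  gmul_1r : forall x, gmul x gone = x;
  gmul_Vl : forall x, gmul (ginv x) x = gone;
  gmul_Vr : forall x, gmul x (ginv x) = gone
}.

Arguments gmul {g}.
Arguments gone {g}.
Arguments ginv {g}.

Fixpoint gpow {G : Group} (x : G) (n : nat) : G :=
  match n with
  | O => gone
  | S k => gmul x (gpow x k)
  end.

Definition gpowZ {G : Group} (x : G) (z : Z) : G :=
  match z with
  | Z0 => gone
  | Zpos p => gpow x (Pos.to_nat p)
  | Zneg p => ginv (gpow x (Pos.to_nat p))
  end.

Definition gprod {G : Group} (l : list G) : G := fold_right gmul gone l.

Definition central {G : Group} (x : G) : Prop := forall g : G, gmul g x = gmul x g.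

Definition is_subgroup {G : Group} (H : G -> Prop) : Prop :=
  H gone /\ (forall x y, H x -> H y -> H (gmul x y)) /\ (forall x, H x -> H (ginv x)).

Definition finite_set {T : Type} (H : T -> Prop) : Prop :=
  exists l : list T, forall x, H x -> In x l.

Definition is_cyclic {G : Group} (H : G -> Prop) : Prop :=
  exists g, H g /\ forall x, H x -> exists k : Z, x = gpowZ g k.

Definition is_hom {G Q : Group} (f : G -> Q) : Prop :=
  forall x y, f (gmul x y) = gmul (f x) (f y).

Definition cyclic_subgroup {G : Group} (x : G) (g : G) : Prop :=
  exists k : Z, g = gpowZ x k.

(* [Q] together with [pi] is (a model of) the quotient G / N:
   pi is a surjective homomorphism with kernel exactly N. *)
Definition is_quotient_by {G Q : Group} (N : G -> Prop) (pi : G -> Q) : Prop :=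
  is_hom pi /\ (forall q : Q, exists g : G, pi g = q) /\
  (forall g : G, pi g = gone <-> N g).

Section Garside.
Variable G : Group.
Variable P : G -> Prop. (* the positive monoid G^+ inside G *)

Definition is_submonoid : Prop :=
  P gone /\ (forall x y, P x -> P y -> P (gmul x y)).

Definition generates_group : Prop :=
  forall H : G -> Prop, is_subgroup H -> (forall x, P x -> H x) -> forall x, H x.

Definition leL (a b : G) : Prop := exists c, P c /\ gmul a c = b.
Definition leR (a b : G) : Prop := exists c, P c /\ gmul c a = b.

Definition atomic : Prop :=
  forall x, P x -> exists N : nat, forall l : list G,
    (forall y, In y l -> P y /\ y <> gone) -> gprod l = x -> length l <= N.

Definition is_lattice (le : G -> G -> Prop) : Prop :=
  (forall a b, P a -> P b -> le a b -> le b a -> a = b) /\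
  (forall a b, P a -> P b -> exists c, P c /\ le c a /\ le c b /\
      forall d, P d -> le d a -> le d b -> le d c) /\
  (forall a b, P a -> P b -> exists c, P c /\ le a c /\ le b c /\
      forall d, P d -> le a d -> le b d -> le c d).

Definition garside_element (Delta : G) : Prop :=
  P Delta /\
  (forall a, P a -> (leL a Delta <-> leR a Delta)) /\
  finite_set (fun a => P a /\ leL a Delta) /\
  (forall x, P x -> exists l : list G,
      (forall a, In a l -> P a /\ leL a Delta) /\ gprod l = x).

(* Since P sits inside the group G and generates it, and
   Garside monoids satisfy the Ore condition, G is the group of fractions of P. *)
Definition garside_group (Delta : G) : Prop :=
  is_submonoid /\ generates_group /\ atomic /\
  is_lattice leL /\ is_lattice leR /\ garside_element Delta.

End Garside.

(* 1. Garside groups are torsion-free.  Conjugation by Delta preserves the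
      positive monoid and every positive element right-divides a power of
      Delta, so every g in G has a positive left translate Delta^N g.
      Hence any finite subset of G has a least common right multiple for the
      prefix order <=_L (translate it into G^+, take joins, translate back).
      If x^n = 1, the set {1, x, ..., x^(n-1)} is stable under left
      multiplication by x and x^-1, so its lcm c satisfies x c = c: x = 1.

   2. Let G be torsion-free, z central of infinite order and pi : G -> Q a
      quotient map with kernel <z>.  For a finite subgroup H of Q, the
      transfer V of pi^-1(H) into <z> = Z is a homomorphism with V(z) = |H|;
      torsion-freeness makes it injective, so pi^-1(H) is infinite cyclic and
      H = pi(pi^-1(H)) is cyclic.  If z = 1 then pi is injective and H is
      trivial. *)

From Stdlib Require Import ZArith List Lia Permutation Wf_nat.
From Stdlib Require Import Classical ClassicalEpsilon.
Set Implicit Arguments.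
Unset Strict Implicit.

Section GroupFacts.
Variable G : Group.
Local Notation "x * y" := (gmul x y).

Lemma mul_cancel_l (g x y : G) : g * x = g * y -> x = y.
Proof.
  intro E. rewrite <- (gmul_1l G x), <- (gmul_1l G y), <- (gmul_Vl G g),
    <- !gmul_assoc, E. reflexivity.
Qed.

Lemma mul_cancel_r (g x y : G) : x * g = y * g -> x = y.
Proof.
  intro E. rewrite <- (gmul_1r G x), <- (gmul_1r G y), <- (gmul_Vr G g),
    !gmul_assoc, E. reflexivity.
Qed.

Lemma inv_uniq_l (x y : G) : y * x = gone -> y = ginv x.
Proof. intro E. apply (mul_cancel_r (g := x)). rewrite E, gmul_Vl. reflexivity. Qed.

Lemma inv_uniq_r (x y : G) : x * y = gone -> y = ginv x.
Proof. intro E. apply (mul_cancel_l (g := x)). rewrite E, gmul_Vr. reflexivity. Qed.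

Lemma inv_one : ginv (@gone G) = gone.
Proof. symmetry. apply inv_uniq_l, gmul_1l. Qed.

Lemma inv_mul (x y : G) : ginv (x * y) = ginv y * ginv x.
Proof.
  symmetry. apply inv_uniq_l.
  rewrite <- gmul_assoc, (gmul_assoc _ (ginv x)), gmul_Vl, gmul_1l, gmul_Vl.
  reflexivity.
Qed.

Lemma mulKV (x y : G) : ginv x * (x * y) = y.
Proof. rewrite gmul_assoc, gmul_Vl, gmul_1l. reflexivity. Qed.

Lemma mulVK (x y : G) : x * (ginv x * y) = y.
Proof. rewrite gmul_assoc, gmul_Vr, gmul_1l. reflexivity. Qed.

Lemma gpow_add (x : G) a b : gpow x (a + b) = gpow x a * gpow x b.
Proof.
  induction a as [|a IH]; simpl.
  - rewrite gmul_1l. reflexivity.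
  - rewrite IH, gmul_assoc. reflexivity.
Qed.

Lemma gpow_comm (x : G) n : x * gpow x n = gpow x n * x.
Proof.
  induction n as [|n IH]; simpl.
  - rewrite gmul_1l, gmul_1r. reflexivity.
  - rewrite <- gmul_assoc, <- IH. reflexivity.
Qed.

Lemma gpow_one n : gpow (@gone G) n = gone.
Proof. induction n as [|n IH]; simpl; [reflexivity | rewrite IH, gmul_1l; reflexivity]. Qed.

Lemma gpowZ_nat (x : G) n : gpowZ x (Z.of_nat n) = gpow x n.
Proof. destruct n; [reflexivity|]. simpl. rewrite SuccNat2Pos.id_succ. reflexivity. Qed.

Lemma gpowZ_negnat (x : G) n : gpowZ x (- Z.of_nat n) = ginv (gpow x n).
Proof.
  destruct n; simpl; [rewrite inv_one; reflexivity|].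
  rewrite SuccNat2Pos.id_succ. reflexivity.
Qed.

Lemma gpowZ_one a : gpowZ (@gone G) a = gone.
Proof. destruct a; simpl; rewrite ?gpow_one; auto using inv_one. Qed.

Lemma Z_nat_cases (a : Z) : exists n, a = Z.of_nat n \/ a = (- Z.of_nat n)%Z.
Proof. exists (Z.to_nat (Z.abs a)). lia. Qed.

Lemma gpowZ_succ (x : G) a : gpowZ x (a + 1) = gpowZ x a * x.
Proof.
  destruct (Z_nat_cases a) as [n [-> | ->]].
  - replace (Z.of_nat n + 1)%Z with (Z.of_nat (S n)) by lia.
    rewrite !gpowZ_nat. apply gpow_comm.
  - destruct n as [|n].
    + simpl. rewrite gmul_1l, gmul_1r. reflexivity.
    + replace (- Z.of_nat (S n) + 1)%Z with (- Z.of_nat n)%Z by lia.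
      rewrite !gpowZ_negnat. simpl. rewrite inv_mul, <- gmul_assoc, gmul_Vl, gmul_1r. reflexivity.
Qed.

Lemma gpowZ_pred (x : G) a : gpowZ x (a - 1) = gpowZ x a * ginv x.
Proof.
  pose proof (gpowZ_succ x (a - 1)) as E. replace (a - 1 + 1)%Z with a in E by lia.
  rewrite E, <- gmul_assoc, gmul_Vr, gmul_1r. reflexivity.
Qed.

Lemma gpowZ_add (x : G) a b : gpowZ x a * gpowZ x b = gpowZ x (a + b).
Proof.
  revert b. apply Z.peano_ind.
  - rewrite Z.add_0_r. apply gmul_1r.
  - intros b IH. rewrite <- Z.add_1_r, gpowZ_succ, gmul_assoc, IH,
      Z.add_assoc, gpowZ_succ. reflexivity.
  - intros b IH. rewrite <- Z.sub_1_r, gpowZ_pred, gmul_assoc, IH,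
      Z.add_sub_assoc, gpowZ_pred. reflexivity.
Qed.

Lemma gpowZ_opp (x : G) a : gpowZ x (- a) = ginv (gpowZ x a).
Proof.
  apply inv_uniq_l. rewrite gpowZ_add. replace (- a + a)%Z with 0%Z by lia.
  reflexivity.
Qed.

Lemma gpowZ_1 (x : G) : gpowZ x 1 = x.
Proof. apply gmul_1r. Qed.

Lemma central_gpowZ (x : G) a : central x -> central (gpowZ x a).
Proof.
  intros Hx g.
  assert (Hpow : forall n, central (gpow x n)).
  { intros n h. induction n as [|n IH]; simpl.
    - rewrite gmul_1l, gmul_1r. reflexivity.
    - rewrite gmul_assoc, Hx, <- gmul_assoc, IH, gmul_assoc. reflexivity. }
  destruct a; simpl; [rewrite gmul_1l, gmul_1r; reflexivity | apply Hpow |].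
  apply (mul_cancel_l (g := gpow x (Pos.to_nat p))).
  rewrite gmul_assoc, <- Hpow, <- gmul_assoc, gmul_Vr, gmul_1r, mulVK.
  reflexivity.
Qed.

Lemma subgroup_gpow (H : G -> Prop) y n : is_subgroup H -> H y -> H (gpow y n).
Proof. intros [H1 [Hmul _]] Hy. induction n; simpl; auto. Qed.

Lemma subgroup_gpowZ (H : G -> Prop) y a : is_subgroup H -> H y -> H (gpowZ y a).
Proof.
  intros HH Hy. pose proof HH as [H1 [_ Hinv]].
  destruct a; simpl; [exact H1 | | apply Hinv]; apply subgroup_gpow; assumption.
Qed.

Lemma finite_subgroup_torsion (H : G -> Prop) (l : list G) y :
  is_subgroup H -> (forall x, H x -> In x l) -> H y ->
  exists k, 0 < k /\ gpow y k = gone.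
Proof.
  intros HH Hl Hy.
  destruct (classic (exists i j, i < j /\ gpow y i = gpow y j)) as [[i [j [Hij E]]]|Hno].
  - exists (j - i). split; [lia|].
    apply (mul_cancel_r (g := gpow y i)). rewrite <- gpow_add, gmul_1l.
    replace (j - i + i) with j by lia. symmetry. exact E.
  - exfalso.
    assert (Hnd : NoDup (map (gpow y) (seq 0 (S (length l))))).
    { apply FinFun.Injective_map_NoDup_in; [|apply seq_NoDup].
      intros a b _ _ E.
      destruct (Nat.lt_total a b) as [h|[h|h]]; auto; exfalso; apply Hno; eauto. }
    apply NoDup_incl_length with (l' := l) in Hnd.
    + rewrite length_map, length_seq in Hnd. lia.
    + intros x Hx. apply in_map_iff in Hx. destruct Hx as [i [<- _]].
      apply Hl, subgroup_gpow; auto.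
Qed.

End GroupFacts.

Section Hom.
Variables G Q : Group.
Variable f : G -> Q.
Hypothesis hf : is_hom f.

Lemma hom_one : f gone = gone.
Proof. apply (mul_cancel_l (g := f gone)). rewrite <- hf, !gmul_1r. reflexivity. Qed.

Lemma hom_inv x : f (ginv x) = ginv (f x).
Proof. apply inv_uniq_l. rewrite <- hf, gmul_Vl. apply hom_one. Qed.

Lemma hom_gpow x n : f (gpow x n) = gpow (f x) n.
Proof. induction n as [|n IH]; simpl; [apply hom_one | rewrite hf, IH; reflexivity]. Qed.

Lemma hom_gpowZ x a : f (gpowZ x a) = gpowZ (f x) a.
Proof.
  destruct a; simpl; [apply hom_one | apply hom_gpow |].
  rewrite hom_inv, hom_gpow. reflexivity.
Qed.

End Hom.

Section GarsideTorsionFree.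
Variable G : Group.
Variable P : G -> Prop.
Variable D : G.
Hypothesis hG : garside_group G P D.
Local Notation "x * y" := (gmul x y).
Local Notation le := (leL G P).

Lemma P_one : P gone.
Proof. destruct hG as [[H1 _] _]. exact H1. Qed.

Lemma P_mul x y : P x -> P y -> P (x * y).
Proof. destruct hG as [[_ Hmul] _]. apply Hmul. Qed.

Lemma P_Delta_pow n : P (gpow D n).
Proof.
  destruct hG as [_ [_ [_ [_ [_ [PD _]]]]]].
  induction n; simpl; [apply P_one | apply P_mul; assumption].
Qed.

Lemma simple_iff s : P s -> (le s D <-> leR G P s D).
Proof. destruct hG as [_ [_ [_ [_ [_ [_ [Hiff _]]]]]]]. apply Hiff. Qed.

Lemma Delta_conj_simple s : P s -> le s D -> exists d, P d /\ D * s = d * D.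
Proof.
  intros Ps Hs. destruct (proj1 (simple_iff Ps) Hs) as [c [Pc Hc]].
  destruct (proj1 (simple_iff Pc) (ex_intro _ s (conj Ps Hc))) as [d [Pd Hd]].
  exists d. split; auto. rewrite <- Hc at 2. rewrite gmul_assoc, Hd. reflexivity.
Qed.

Lemma simple_ind (R : G -> Prop) : R gone ->
  (forall s x, P s -> le s D -> P x -> R x -> R (s * x)) ->
  forall x, P x -> R x.
Proof.
  intros R1 Rstep x Px.
  destruct hG as [_ [_ [_ [_ [_ [_ [_ [_ Hgen]]]]]]]].
  destruct (Hgen x Px) as [l [Hl <-]]. clear Px.
  induction l as [|s l IH]; simpl; auto.
  destruct (Hl s (or_introl eq_refl)) as [Ps Hs].
  assert (Pl : P (gprod l)).
  { clear IH Hs. induction l; simpl; [apply P_one|].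
    apply P_mul; [apply Hl|apply IHl]; simpl; auto.
    intros b Hb. apply Hl. destruct Hb; simpl; auto. }
  apply Rstep; auto. apply IH. intros a Ha. apply Hl. simpl. auto.
Qed.

Lemma Delta_pow_conj M p : P p -> exists p', P p' /\ gpow D M * p = p' * gpow D M.
Proof.
  assert (Hone : forall p, P p -> exists p', P p' /\ D * p = p' * D).
  { apply simple_ind.
    - exists gone. split; [apply P_one|]. rewrite gmul_1l, gmul_1r. reflexivity.
    - intros s x Ps Hs _ [x' [Px' Hx']].
      destruct (Delta_conj_simple Ps Hs) as [d [Pd Hd]].
      exists (d * x'). split; [apply P_mul; auto|].
      rewrite gmul_assoc, Hd, <- gmul_assoc, Hx', gmul_assoc. reflexivity. }
  revert p. induction M as [|M IH]; intros p Pp; simpl.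
  - exists p. split; auto. rewrite gmul_1l, gmul_1r. reflexivity.
  - destruct (IH p Pp) as [p1 [Pp1 H1]]. destruct (Hone p1 Pp1) as [p2 [Pp2 H2]].
    exists p2. split; auto.
    rewrite <- gmul_assoc, H1, gmul_assoc, H2, gmul_assoc. reflexivity.
Qed.

Lemma positive_divides_Delta_pow p : P p -> exists L c, P c /\ c * p = gpow D L.
Proof.
  revert p. apply simple_ind.
  - exists 0, gone. split; [apply P_one | apply gmul_1l].
  - intros s x Ps Hs _ [n [c [Pc Hc]]].
    destruct (proj1 (simple_iff Ps) Hs) as [c1 [Pc1 Hc1]].
    destruct (Delta_pow_conj 1 Pc) as [c' [Pc' Hc']]. simpl in Hc'.
    rewrite !gmul_1r in Hc'.
    exists (S n), (c' * c1). split; [apply P_mul; auto|].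
    simpl. rewrite <- Hc, (gmul_assoc _ D c), Hc', <- Hc1, !gmul_assoc. reflexivity.
Qed.

Lemma Delta_pow_translate g : exists N, P (gpow D N * g).
Proof.
  destruct hG as [_ [Hgen _]].
  apply (Hgen (fun g => exists N, P (gpow D N * g))).
  - split; [|split].
    + exists 0. simpl. rewrite gmul_1l. apply P_one.
    + intros a b [N Ha] [M Hb]. destruct (Delta_pow_conj M Ha) as [p' [Pp' Hp']].
      exists (M + N). rewrite gpow_add, <- gmul_assoc, (gmul_assoc _ (gpow D N)),
        (gmul_assoc _ (gpow D M)), Hp', <- gmul_assoc. apply P_mul; auto.
    + intros a [N Ha]. destruct (positive_divides_Delta_pow Ha) as [L [c [Pc Hc]]].
      exists L. rewrite <- Hc, <- !gmul_assoc, gmul_Vr, gmul_1r.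
      apply P_mul; auto using P_Delta_pow.
  - intros x Px. exists 0. simpl. rewrite gmul_1l. exact Px.
Qed.

Lemma Delta_pow_translate_list l : exists N, forall s, In s l -> P (gpow D N * s).
Proof.
  assert (Hmono : forall N k g, P (gpow D N * g) -> P (gpow D (k + N) * g)).
  { intros N k g Hg. rewrite gpow_add, <- gmul_assoc. apply P_mul; auto using P_Delta_pow. }
  induction l as [|a l [N2 IH]].
  - exists 0. intros s [].
  - destruct (Delta_pow_translate a) as [N1 H1]. exists (N1 + N2). intros s [<-|Hs].
    + rewrite Nat.add_comm. apply Hmono; auto.
    + apply Hmono; auto.
Qed.

Lemma le_refl x : le x x.
Proof. exists gone. split; [apply P_one | apply gmul_1r]. Qed.

Lemma le_trans x y z : le x y -> le y z -> le x z.
Proof.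
  intros [c [Pc Hc]] [d [Pd Hd]]. exists (c * d). split; [apply P_mul; auto|].
  rewrite gmul_assoc, Hc. exact Hd.
Qed.

Lemma le_translate g x y : le x y <-> le (g * x) (g * y).
Proof.
  assert (Hdir : forall g x y, le x y -> le (g * x) (g * y)).
  { intros h a b [c [Pc Hc]]. exists c. split; auto. rewrite <- gmul_assoc, Hc. reflexivity. }
  split; [apply Hdir|]. intro E. apply (Hdir (ginv g)) in E. rewrite !mulKV in E. exact E.
Qed.

(* The prefix order is antisymmetric on all of G (G^+ has no non-trivial units). *)
Lemma le_antisym x y : le x y -> le y x -> x = y.
Proof.
  intros [c [Pc Hc]] [d [Pd Hd]].
  destruct hG as [_ [_ [_ [[Hanti _] _]]]].
  assert (Hcd : c * d = gone).
  { apply (mul_cancel_l (g := x)). rewrite gmul_1r, gmul_assoc, Hc, Hd. reflexivity. }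
  assert (Hc1 : c = gone).
  { symmetry. apply Hanti; auto using P_one.
    - exists c. split; [exact Pc | apply gmul_1l].
    - exists d. split; assumption. }
  rewrite Hc1, gmul_1r in Hc. exact Hc.
Qed.

Definition is_lcm (S : list G) (c : G) : Prop :=
  (forall s, In s S -> le s c) /\ (forall d, (forall s, In s S -> le s d) -> le c d).

Lemma lcm_positive a l : P a -> (forall s, In s l -> P s) ->
  exists c, P c /\ is_lcm (a :: l) c.
Proof.
  revert a. induction l as [|b l IH]; intros a Pa Hl.
  - exists a. repeat split; auto.
    + intros s [<-|[]]. apply le_refl.
    + intros d Hd. apply Hd. left. reflexivity.
  - destruct (IH b (Hl b (or_introl eq_refl))) as [c0 [Pc0 [Hub Hleast]]].
    { intros s Hs. apply Hl. right. exact Hs. }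
    destruct hG as [_ [_ [_ [[_ [_ Hjoin]] _]]]].
    destruct (Hjoin a c0 Pa Pc0) as [c [Pc [Hac [Hc0c Hj]]]].
    exists c. split; [exact Pc|]. split.
    + intros s [<-|Hs]; [exact Hac|]. apply le_trans with c0; auto.
    + intros d Hd.
      assert (Pd : P d).
      { destruct (Hd a (or_introl eq_refl)) as [e [Pe He]]. rewrite <- He. apply P_mul; auto. }
      apply Hj; [exact Pd | apply Hd; left; reflexivity |].
      apply Hleast. intros s Hs. apply Hd. right. exact Hs.
Qed.

(* Every non-empty finite list of G has an lcm: translate it into G^+. *)
Lemma lcm_exists a l : exists c, is_lcm (a :: l) c.
Proof.
  destruct (Delta_pow_translate_list (a :: l)) as [N HN].
  set (g := gpow D N).
  destruct (@lcm_positive (g * a) (map (gmul g) l)) as [c [_ [Hub Hleast]]].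
  - apply HN. left. reflexivity.
  - intros s Hs. apply in_map_iff in Hs. destruct Hs as [x [<- Hx]]. apply HN. right. exact Hx.
  - exists (ginv g * c). split.
    + intros s Hs. apply (le_translate g). rewrite mulVK. apply Hub.
      destruct Hs as [<-|Hs]; [left; reflexivity | right; apply in_map; exact Hs].
    + intros d Hd. apply (le_translate g). rewrite mulVK. apply Hleast.
      intros s [<-|Hs]; [apply le_translate, Hd; left; reflexivity|].
      apply in_map_iff in Hs. destruct Hs as [x [<- Hx]].
      apply le_translate, Hd. right. exact Hx.
Qed.

(* An element permuting a finite set by left multiplication fixes its lcm,
   hence is trivial. *)
Lemma lcm_stabilizer_trivial S c x : is_lcm S c ->
  (forall s, In s S -> In (x * s) S) -> (forall s, In s S -> In (ginv x * s) S) ->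
  x = gone.
Proof.
  intros [Hub Hleast] Hx Hxinv.
  assert (E : x * c = c).
  { apply le_antisym.
    - apply (le_translate (ginv x)). rewrite mulKV. apply Hleast.
      intros s Hs. apply (le_translate x). rewrite mulVK. apply Hub. auto.
    - apply Hleast. intros s Hs. rewrite <- (mulVK x s). apply le_translate, Hub. auto. }
  apply (mul_cancel_r (g := c)). rewrite gmul_1l. exact E.
Qed.

Theorem garside_torsion_free (x : G) n : 0 < n -> gpow x n = gone -> x = gone.
Proof.
  intros Hn Hx. destruct n as [|n]; [lia|].
  set (powers := map (gpow x) (seq 0 (S n))).
  assert (HS : forall s, In s powers <-> exists i, i < S n /\ s = gpow x i).
  { intro s. unfold powers. rewrite in_map_iff. split.
    - intros [i [<- Hi]]. apply in_seq in Hi. exists i. split; [lia | reflexivity].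
    - intros [i [Hi ->]]. exists i. split; [reflexivity | apply in_seq; lia]. }
  destruct (lcm_exists (gpow x 0) (map (gpow x) (seq 1 n))) as [c Hc].
  apply (lcm_stabilizer_trivial Hc); fold powers; intros s Hs;
    apply HS in Hs; destruct Hs as [i [Hi ->]]; apply HS.
  - destruct (Nat.eq_dec i n) as [->|E].
    + exists 0. split; [lia | exact Hx].
    + exists (S i). split; [lia | reflexivity].
  - destruct i as [|i].
    + exists n. split; [lia|]. simpl. rewrite gmul_1r. symmetry.
      apply inv_uniq_r. exact Hx.
    + exists i. split; [lia|]. apply mulKV.
Qed.

End GarsideTorsionFree.

Lemma finite_set_enum (T : Type) (H : T -> Prop) :
  finite_set H -> exists l, NoDup l /\ forall x, In x l <-> H x.
Proof.
  intros [l Hl].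
  set (inH := fun x => if excluded_middle_informative (H x) then true else false).
  set (dec := fun x y : T => excluded_middle_informative (x = y)).
  exists (nodup dec (filter inH l)). split; [apply NoDup_nodup|].
  intro x. rewrite nodup_In, filter_In. unfold inH.
  destruct (excluded_middle_informative (H x)); split; intuition; discriminate.
Qed.

Definition sumZ (l : list Z) : Z := fold_right Z.add 0%Z l.

Lemma sumZ_perm l l' : Permutation l l' -> sumZ l = sumZ l'.
Proof. induction 1; simpl in *; lia. Qed.

Lemma sumZ_add (A : Type) (f g : A -> Z) l :
  sumZ (map (fun x => f x + g x)%Z l) = (sumZ (map f l) + sumZ (map g l))%Z.
Proof. induction l; simpl; lia. Qed.

Lemma sumZ_const (A : Type) (a : Z) (l : list A) :
  sumZ (map (fun _ => a) l) = (a * Z.of_nat (length l))%Z.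
Proof. induction l; simpl length; simpl; lia. Qed.

Section Transfer.
Variables G Q : Group.
Variable pi : G -> Q.
Variable z : G.
Hypothesis hhom : is_hom pi.
Hypothesis hsurj : forall q, exists g, pi g = q.
Hypothesis hker : forall g, pi g = gone <-> cyclic_subgroup z g.
Hypothesis hcent : central z.
Hypothesis htf : forall (x : G) n, 0 < n -> gpow x n = gone -> x = gone.
Hypothesis hz : z <> gone.
Variable H : Q -> Prop.
Hypothesis hH : is_subgroup H.
Variable lQ : list Q.
Hypothesis hlQnd : NoDup lQ.
Hypothesis hlQ : forall q, In q lQ <-> H q.
Local Notation "x * y" := (gmul x y).

Lemma gpowZ_inj a b : gpowZ z a = gpowZ z b -> a = b.
Proof.
  intro E. assert (E0 : gpowZ z (a - b) = gone).
  { replace (a - b)%Z with (a + - b)%Z by lia.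
    rewrite <- gpowZ_add, gpowZ_opp, E, gmul_Vr. reflexivity. }
  destruct (Z_nat_cases (a - b)) as [n [Hn|Hn]]; rewrite Hn in E0;
    (destruct n as [|n]; [lia|]); exfalso; apply hz, (htf (n := S n)); try lia.
  - rewrite gpowZ_nat in E0. exact E0.
  - rewrite gpowZ_negnat in E0. apply (mul_cancel_l (g := ginv (gpow z (S n)))).
    rewrite gmul_Vl, E0, gmul_1l. reflexivity.
Qed.

Definition sec (q : Q) : G := proj1_sig (constructive_indefinite_description _ (hsurj q)).

Lemma sec_spec q : pi (sec q) = q.
Proof. unfold sec. destruct constructive_indefinite_description as [g Hg]. exact Hg. Qed.

Definition cocycle (h : G) (q : Q) : Z :=
  epsilon (inhabits 0%Z) (fun a => h * sec q = sec (pi h * q) * gpowZ z a).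

Lemma cocycle_spec h q : h * sec q = sec (pi h * q) * gpowZ z (cocycle h q).
Proof.
  unfold cocycle. apply epsilon_spec.
  set (k := ginv (sec (pi h * q)) * (h * sec q)).
  assert (Hk : pi k = gone).
  { unfold k. rewrite !hhom, (hom_inv hhom), !sec_spec, gmul_Vl. reflexivity. }
  apply hker in Hk. destruct Hk as [a Ha]. exists a.
  rewrite <- Ha. unfold k. rewrite mulVK. reflexivity.
Qed.

Lemma cocycle_uniq h q a : h * sec q = sec (pi h * q) * gpowZ z a -> cocycle h q = a.
Proof.
  intro E. apply gpowZ_inj, (mul_cancel_l (g := sec (pi h * q))).
  rewrite <- E. symmetry. apply cocycle_spec.
Qed.

Lemma cocycle_mul a b q : cocycle (a * b) q = Z.add (cocycle a (pi b * q)) (cocycle b q).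
Proof.
  apply cocycle_uniq. rewrite <- gmul_assoc, cocycle_spec, gmul_assoc, cocycle_spec,
    <- gmul_assoc, gpowZ_add, hhom, gmul_assoc. reflexivity.
Qed.

Lemma cocycle_central a q : cocycle (gpowZ z a) q = a.
Proof.
  apply cocycle_uniq.
  assert (E : pi (gpowZ z a) = gone) by (apply hker; exists a; reflexivity).
  rewrite E, gmul_1l. symmetry. apply central_gpowZ, hcent.
Qed.

Definition transfer (h : G) : Z := sumZ (map (cocycle h) lQ).

Lemma enum_translate x : H x -> Permutation (map (gmul x) lQ) lQ.
Proof.
  intro Hx. destruct hH as [_ [Hmul Hinv]].
  apply Permutation_map_same_l.
  - apply FinFun.Injective_map_NoDup_in; [|exact hlQnd].
    intros a b _ _ E. exact (mul_cancel_l E).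
  - intros y Hy. apply in_map_iff in Hy. destruct Hy as [q [<- Hq]].
    apply hlQ. apply hlQ in Hq. auto.
Qed.

Lemma transfer_mul a b : H (pi b) -> transfer (a * b) = (transfer a + transfer b)%Z.
Proof.
  intro Hb. unfold transfer.
  rewrite (map_ext _ _ (cocycle_mul a b)), sumZ_add. f_equal.
  rewrite <- (map_map (gmul (pi b)) (cocycle a)).
  apply sumZ_perm, Permutation_map, enum_translate, Hb.
Qed.

Lemma transfer_central a : transfer (gpowZ z a) = (a * Z.of_nat (length lQ))%Z.
Proof. unfold transfer. rewrite (map_ext _ _ (cocycle_central a)). apply sumZ_const. Qed.

Lemma transfer_one : transfer gone = 0%Z.
Proof. change (@gone G) with (gpowZ z 0). rewrite transfer_central. lia. Qed.

Lemma preimage_gpow h n : H (pi h) -> H (pi (gpow h n)).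
Proof. intro Hh. rewrite (hom_gpow hhom). apply subgroup_gpow; assumption. Qed.

Lemma preimage_gpowZ h a : H (pi h) -> H (pi (gpowZ h a)).
Proof. intro Hh. rewrite (hom_gpowZ hhom). apply subgroup_gpowZ; assumption. Qed.

Lemma transfer_gpow h n : H (pi h) -> transfer (gpow h n) = (Z.of_nat n * transfer h)%Z.
Proof.
  intro Hh. induction n as [|n IH]; simpl gpow; [rewrite transfer_one; lia|].
  rewrite transfer_mul, IH by (apply preimage_gpow; exact Hh). lia.
Qed.

Lemma transfer_inv h : H (pi h) -> transfer (ginv h) = (- transfer h)%Z.
Proof.
  intro Hh. pose proof (transfer_mul (ginv h) Hh) as E.
  rewrite gmul_Vl, transfer_one in E. lia.
Qed.

Lemma transfer_gpowZ h a : H (pi h) -> transfer (gpowZ h a) = (a * transfer h)%Z.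
Proof.
  intro Hh. destruct a; simpl gpowZ.
  - rewrite transfer_one. lia.
  - rewrite transfer_gpow by exact Hh. lia.
  - rewrite transfer_inv, transfer_gpow by auto using preimage_gpow. lia.
Qed.

(* The transfer is injective on pi^-1(H): if V(h) = 0, some power h^k lies
   in <z>, say h^k = z^a; then 0 = k V(h) = a |H| forces a = 0, and h = 1 by
   torsion-freeness. *)
Lemma transfer_kernel h : H (pi h) -> transfer h = 0%Z -> h = gone.
Proof.
  intros Hh Vh.
  destruct (finite_subgroup_torsion (l := lQ) hH (fun x Hx => proj2 (hlQ x) Hx) Hh)
    as [k [Hk Ek]].
  rewrite <- (hom_gpow hhom) in Ek. apply hker in Ek. destruct Ek as [a Ea].
  assert (Hlen : (0 < Z.of_nat (length lQ))%Z).
  { pose proof (proj2 (hlQ gone) (proj1 hH)) as Hin.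
    destruct lQ; [destruct Hin | simpl length; lia]. }
  assert (Ha : a = 0%Z).
  { assert (E : transfer (gpow h k) = transfer (gpowZ z a)) by (rewrite Ea; reflexivity).
    rewrite transfer_gpow, transfer_central, Vh in E by exact Hh. nia. }
  apply (htf (n := k)); [exact Hk|]. rewrite Ea, Ha. reflexivity.
Qed.

(* The transfer takes positive values on pi^-1(H) (e.g. V(z) = |H|), so it
   attains a least positive value. *)
Lemma transfer_least_positive : exists h0, H (pi h0) /\ (0 < transfer h0)%Z /\
  forall h, H (pi h) -> (0 < transfer h)%Z -> (transfer h0 <= transfer h)%Z.
Proof.
  set (Pos := fun d => exists h, H (pi h) /\ transfer h = Z.of_nat d /\ 0 < d).
  destruct (dec_inh_nat_subset_has_unique_least_element Pos (fun n => classic (Pos n)))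
    as [d0 [[[h0 [Hh0 [Vh0 Hd0]]] Hmin] _]].
  - exists (length lQ), z.
    assert (Ez : pi z = gone) by (apply hker; exists 1%Z; symmetry; apply gpowZ_1).
    rewrite Ez, <- (gpowZ_1 z), transfer_central. split; [exact (proj1 hH)|].
    pose proof (proj2 (hlQ gone) (proj1 hH)) as Hin.
    destruct lQ; [destruct Hin | simpl length; split; lia].
  - exists h0. split; [exact Hh0|]. split; [lia|]. intros h Hh Vh.
    assert (Hle : d0 <= Z.to_nat (transfer h)).
    { apply Hmin. exists h. split; [exact Hh|]. split; lia. }
    lia.
Qed.

(* pi^-1(H) is cyclic, generated by an element of least positive transfer:
   dividing V(g) by V(h0) leaves a remainder g h0^-q of smaller transfer,
   which must be trivial. *)
Lemma preimage_cyclic : exists h0, H (pi h0) /\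
  forall g, H (pi g) -> exists q, g = gpowZ h0 q.
Proof.
  destruct transfer_least_positive as [h0 [Hh0 [Vpos Hmin]]].
  exists h0. split; [exact Hh0|]. intros g Hg.
  pose proof (Z.div_mod (transfer g) (transfer h0) ltac:(lia)) as Hdm.
  pose proof (Z.mod_pos_bound (transfer g) (transfer h0) Vpos) as Hb.
  set (q := (transfer g / transfer h0)%Z) in *.
  set (r := (transfer g mod transfer h0)%Z) in *.
  set (g' := g * gpowZ h0 (- q)).
  assert (Hg' : H (pi g')).
  { unfold g'. rewrite hhom. apply (proj1 (proj2 hH)); [exact Hg|].
    apply preimage_gpowZ, Hh0. }
  assert (Vg' : transfer g' = r).
  { unfold g'. rewrite transfer_mul, transfer_gpowZ by auto using preimage_gpowZ. lia. }
  assert (Hr : r = 0%Z).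
  { destruct (Z.eq_dec r 0) as [|Hne]; [assumption|].
    specialize (Hmin g' Hg'). lia. }
  assert (E : g' = gone) by (apply transfer_kernel; [exact Hg' | lia]).
  exists q. unfold g' in E. rewrite gpowZ_opp in E.
  apply (mul_cancel_r (g := ginv (gpowZ h0 q))). rewrite E, gmul_Vr. reflexivity.
Qed.

Lemma quotient_subgroup_cyclic : is_cyclic H.
Proof.
  destruct preimage_cyclic as [h0 [Hh0 Hgen]].
  exists (pi h0). split; [exact Hh0|]. intros x Hx.
  destruct (hsurj x) as [g <-]. destruct (Hgen g Hx) as [q ->].
  exists q. apply (hom_gpowZ hhom).
Qed.

End Transfer.

Theorem central_quotient_finite_subgroup_cyclic (G Q : Group) (z : G) (pi : G -> Q) :
  (forall (x : G) n, 0 < n -> gpow x n = gone -> x = gone) -> central z ->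
  is_quotient_by (cyclic_subgroup z) pi ->
  forall H : Q -> Prop, is_subgroup H -> finite_set H -> is_cyclic H.
Proof.
  intros htf hcent [hhom [hsurj hker]] H hH hfin.
  destruct (finite_set_enum hfin) as [lQ [hnd hlQ]].
  destruct (classic (z = gone)) as [Ez|Ez].
  - (* pi is injective, so H is a finite subgroup of G, hence trivial. *)
    exists gone. split; [exact (proj1 hH)|]. intros x Hx. exists 0%Z.
    destruct (finite_subgroup_torsion (l := lQ) hH (fun y Hy => proj2 (hlQ y) Hy) Hx)
      as [k [Hk Ek]].
    destruct (hsurj x) as [g <-].
    rewrite <- (hom_gpow hhom) in Ek. apply hker in Ek. destruct Ek as [a Ea].
    rewrite Ez, gpowZ_one in Ea. rewrite (htf g k Hk Ea). apply (hom_one hhom).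
  - exact (quotient_subgroup_cyclic hhom hsurj hker hcent htf Ez hH hnd hlQ).
Qed.

Unset Implicit Arguments.
Set Strict Implicit.

Theorem mainTheorem9 (G : Group) (P : G -> Prop) (Delta : G) (m : nat)
  (hG : garside_group G P Delta)
  (hm_pos : 0 < m)
  (hm_central : central (gpow Delta m))
  (hm_min : forall k : nat, 0 < k -> k < m -> ~ central (gpow Delta k))
  (Q : Group) (pi : G -> Q)
  (hQ : is_quotient_by (cyclic_subgroup (gpow Delta m)) pi) :
  forall H : Q -> Prop, is_subgroup H -> finite_set H -> is_cyclic H.
Proof.
  apply (central_quotient_finite_subgroup_cyclic (z := gpow Delta m) (pi := pi)).
  - intros x n Hn Hx. exact (garside_torsion_free hG Hn Hx).
  - exact hm_central.
  - exact hQ.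
Qed.
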